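(* Let $m\ge0$ and $k\ge1$ be integers and $n\ge0$. Then $$\lim_{q\to1}\frac{\sum_{j=0}^{2n}(-1)^jq^{mj}\begin{bmatrix} 2n\\ j\end{bmatrix}_{q^k}}{(q;q^2)_n}=k^n,\qquad \lim_{q\to1}\frac{\sum_{j=0}^{2n+1}(-1)^jq^{mj}\begin{bmatrix} 2n+1\\ j\end{bmatrix}_{q^k}}{(q;q^2)_{n+1}}=mk^n.$$
   Context: $(x;q)_n=\prod_{j=0}^{n-1}(1-q^jx)$. The Gaussian binomial coefficient is $\begin{bmatrix} n\\ j\end{bmatrix}_q=\frac{(q;q)_n}{(q;q)_j(q;q)_{n-j}}$ for $0\le j\le n$, a polynomial in $q$; $\begin{bmatrix} n\\ j\end{bmatrix}_{q^k}$ is this with $q$ replaced by $q^k$. The quotients are rational functions of $q$ and the limits are taken as $q\to1$. *)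

From Stdlib Require Import Reals.
Open Scope R_scope.

Fixpoint qpoch (x q : R) (n : nat) : R :=
  match n with
  | O => 1
  | S n' => qpoch x q n' * (1 - q ^ n' * x)
  end.

(* Gaussian binomial [n choose j]_q = (q;q)_n / ((q;q)_j (q;q)_{n-j}),
   as a function of q (agrees with the polynomial for q not a root of unity). *)
Definition qbinom (q : R) (n j : nat) : R :=
  qpoch q q n / (qpoch q q j * qpoch q q (n - j)).

Definition altsum (m k N : nat) (q : R) : R :=
  sum_f_R0 (fun j => (-1) ^ j * q ^ (m * j) * qbinom (q ^ k) N j) N.

From Stdlib Require Import Reals Lra Lia.
Open Scope R_scope.

(* Write p = q^k, z = q^m and S_N(z) = sum_j (-1)^j z^j [N, j]_p.  The two q-Pascal
   rules give S_{N+1}(z) = S_N(pz) - z S_N(z) and S_{N+1}(pz) = S_N(pz) - p^{N+1} z S_N(z),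
   hence the three-term recurrence S_{N+2} = (1 - z) S_{N+1} + z (1 - p^{N+1}) S_N.
   Every coefficient 1 - q^i in it is (1 - q) [i]_q, so by induction
   S_{2n} = (1 - q)^n A_n(q) and S_{2n+1} = (1 - q)^{n+1} B_n(q) with A_n, B_n continuous,
   while (q; q^2)_n = (1 - q)^n prod_{i<n} [2i+1]_q.  At q = 1 the recurrences for A_n, B_n
   collapse to A_n(1) = k^n (2n-1)!! and B_n(1) = m k^n (2n+1)!!, and the limits follow by
   continuity. *)

Lemma pow_neq_1 (x : R) (i : nat) : 0 < x -> x <> 1 -> (1 <= i)%nat -> x ^ i <> 1.
Proof.
  intros x_pos x_neq_1 i_pos.
  destruct (Rlt_or_le x 1) as [x_lt_1|x_ge_1].
  - assert (0 <= x ^ i < 1) by (apply pow_lt_1_compat; [lra|lia]). lra.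
  - assert (1 < x ^ i) by (apply Rlt_pow_R1; [lra|lia]). lra.
Qed.

Section GaussianBinomial.

Variable p : R.
Hypothesis p_pos : 0 < p.
Hypothesis p_neq_1 : p <> 1.

Lemma qpoch_factor_neq_0 (i : nat) : 1 - p ^ i * p <> 0.
Proof.
  pose proof (pow_neq_1 p (S i) p_pos p_neq_1 ltac:(lia)) as H.
  simpl in H. rewrite Rmult_comm. lra.
Qed.

Lemma qpoch_q_neq_0 (n : nat) : qpoch p p n <> 0.
Proof.
  induction n as [|n IHn]; simpl; [lra|].
  apply Rmult_integral_contrapositive_currified; auto using qpoch_factor_neq_0.
Qed.

Lemma qbinom_n_0 (N : nat) : qbinom p N 0 = 1.
Proof. unfold qbinom. rewrite Nat.sub_0_r. simpl. field. apply qpoch_q_neq_0. Qed.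

Lemma qbinom_n_n (N : nat) : qbinom p N N = 1.
Proof. unfold qbinom. rewrite Nat.sub_diag. simpl. field. apply qpoch_q_neq_0. Qed.

(* The second rule is [N+1, j+1] = [N, j+1] + p^(N-j) [N, j], multiplied by p^j
   to avoid truncated subtraction. *)
Lemma qbinom_Pascal (N j : nat) : (j < N)%nat ->
  qbinom p (S N) (S j) = p ^ S j * qbinom p N (S j) + qbinom p N j /\
  p ^ j * qbinom p (S N) (S j) = p ^ j * qbinom p N (S j) + p ^ N * qbinom p N j.
Proof.
  intros j_lt_N.
  destruct (Nat.le_exists_sub (S j) N j_lt_N) as [r [-> _]].
  unfold qbinom.
  replace (S (r + S j) - S j)%nat with (S r) by lia.
  replace (r + S j - S j)%nat with r by lia.
  replace (r + S j - j)%nat with (S r) by lia.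
  simpl qpoch.
  pose proof (qpoch_q_neq_0 j). pose proof (qpoch_q_neq_0 r).
  pose proof (qpoch_factor_neq_0 j). pose proof (qpoch_factor_neq_0 r).
  rewrite !pow_add. simpl. split; field; repeat split; auto.
Qed.

Definition qbinomz (N j : nat) : R := if (j <=? N)%nat then qbinom p N j else 0.

Lemma qbinomz_le (N j : nat) : (j <= N)%nat -> qbinomz N j = qbinom p N j.
Proof. intros. unfold qbinomz. destruct (Nat.leb_spec j N); [reflexivity|lia]. Qed.

Lemma qbinomz_gt (N j : nat) : (N < j)%nat -> qbinomz N j = 0.
Proof. intros. unfold qbinomz. destruct (Nat.leb_spec j N); [lia|reflexivity]. Qed.

Lemma qbinomz_n_0 (N : nat) : qbinomz N 0 = 1.
Proof. rewrite qbinomz_le by lia. apply qbinom_n_0. Qed.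

Lemma qbinomz_Pascal_l (N j : nat) :
  qbinomz (S N) (S j) = p ^ S j * qbinomz N (S j) + qbinomz N j.
Proof.
  destruct (Compare_dec.lt_eq_lt_dec j N) as [[j_lt_N | ->] | N_lt_j].
  - rewrite !qbinomz_le by lia. apply qbinom_Pascal; assumption.
  - rewrite (qbinomz_gt N (S N)), !qbinomz_le by lia.
    rewrite !qbinom_n_n. ring.
  - rewrite !qbinomz_gt by lia. ring.
Qed.

Lemma qbinomz_Pascal_r (N j : nat) :
  p ^ j * qbinomz (S N) (S j) = p ^ j * qbinomz N (S j) + p ^ N * qbinomz N j.
Proof.
  destruct (Compare_dec.lt_eq_lt_dec j N) as [[j_lt_N | ->] | N_lt_j].
  - rewrite !qbinomz_le by lia. apply qbinom_Pascal; assumption.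
  - rewrite (qbinomz_gt N (S N)), !qbinomz_le by lia.
    rewrite !qbinom_n_n. ring.
  - rewrite !qbinomz_gt by lia. ring.
Qed.

Definition altpoly (N : nat) (z : R) : R :=
  sum_f_R0 (fun j => (-1) ^ j * z ^ j * qbinomz N j) N.

Lemma altpoly_extend (N : nat) (z : R) :
  sum_f_R0 (fun j => (-1) ^ j * z ^ j * qbinomz N j) (S N) = altpoly N z.
Proof. simpl. rewrite qbinomz_gt by lia. unfold altpoly. ring. Qed.

Lemma altpoly_S_shift (N : nat) (z : R) :
  altpoly (S N) z =
  1 + sum_f_R0 (fun i => (-1) ^ S i * z ^ S i * qbinomz (S N) (S i)) N.
Proof.
  unfold altpoly. rewrite (decomp_sum _ (S N)) by lia.
  rewrite qbinomz_n_0. simpl Nat.pred. simpl (_ ^ 0). ring.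
Qed.

Lemma altpoly_shift (N : nat) (z : R) :
  altpoly N z =
  1 + sum_f_R0 (fun i => (-1) ^ S i * z ^ S i * qbinomz N (S i)) N.
Proof.
  rewrite <- altpoly_extend, (decomp_sum _ (S N)) by lia.
  rewrite qbinomz_n_0. simpl Nat.pred. simpl (_ ^ 0). ring.
Qed.

Lemma altpoly_S_l (N : nat) (z : R) :
  altpoly (S N) z = altpoly N (p * z) - z * altpoly N z.
Proof.
  rewrite altpoly_S_shift, (altpoly_shift N (p * z)).
  transitivity (1 + (sum_f_R0 (fun i => (-1) ^ S i * (p * z) ^ S i * qbinomz N (S i)) N
    + sum_f_R0 (fun i => (-1) ^ i * z ^ i * qbinomz N i * - z) N)).
  - rewrite <- plus_sum. f_equal. apply sum_eq. intros i _.
    rewrite qbinomz_Pascal_l, Rpow_mult_distr. simpl. ring.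
  - rewrite <- scal_sum. unfold altpoly. ring.
Qed.

Lemma altpoly_S_r (N : nat) (z : R) :
  altpoly (S N) (p * z) = altpoly N (p * z) - p ^ S N * z * altpoly N z.
Proof.
  rewrite altpoly_S_shift, (altpoly_shift N (p * z)).
  transitivity (1 + (sum_f_R0 (fun i => (-1) ^ S i * (p * z) ^ S i * qbinomz N (S i)) N
    + sum_f_R0 (fun i => (-1) ^ i * z ^ i * qbinomz N i * - (p ^ S N * z)) N)).
  - rewrite <- plus_sum. f_equal. apply sum_eq. intros i _.
    transitivity ((-1) ^ S i * p * z * z ^ i * (p ^ i * qbinomz (S N) (S i))).
    + rewrite Rpow_mult_distr. simpl. ring.
    + rewrite qbinomz_Pascal_r, Rpow_mult_distr. simpl. ring.
  - rewrite <- scal_sum. unfold altpoly. ring.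
Qed.

Lemma altpoly_rec (N : nat) (z : R) :
  altpoly (S (S N)) z = (1 - z) * altpoly (S N) z + z * (1 - p ^ S N) * altpoly N z.
Proof.
  rewrite (altpoly_S_l (S N)), altpoly_S_r, (altpoly_S_l N). ring.
Qed.

End GaussianBinomial.

Fixpoint qint (n : nat) (q : R) : R :=
  match n with
  | O => 0
  | S n' => 1 + q * qint n' q
  end.

Lemma qint_spec (n : nat) (q : R) : (1 - q) * qint n q = 1 - q ^ n.
Proof.
  induction n as [|n IHn]; simpl; [ring|].
  transitivity (1 - q + q * ((1 - q) * qint n q)); [ring|].
  rewrite IHn. ring.
Qed.

Lemma qint_1 (n : nat) : qint n 1 = INR n.
Proof. induction n as [|n IHn]; simpl qint; [reflexivity|]. rewrite IHn, S_INR. ring. Qed.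

Lemma qint_ge_0 (n : nat) (q : R) : 0 < q -> 0 <= qint n q.
Proof.
  intros q_pos. induction n as [|n IHn]; simpl; [lra|].
  assert (0 <= q * qint n q) by (apply Rmult_le_pos; lra). lra.
Qed.

Lemma qint_S_gt_0 (n : nat) (q : R) : 0 < q -> 0 < qint (S n) q.
Proof.
  intros q_pos. simpl.
  assert (0 <= q * qint n q) by (apply Rmult_le_pos; [lra|apply qint_ge_0; auto]). lra.
Qed.

Lemma continuity_qint (n : nat) : continuity (qint n).
Proof.
  induction n as [|n IHn]; simpl qint.
  - apply continuity_const. intros a b. reflexivity.
  - apply (continuity_plus (fun _ => 1) (fun q => q * qint n q)).
    + apply continuity_const. intros a b. reflexivity.
    + apply (continuity_mult id (qint n)); [apply derivable_continuous, derivable_id|auto].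
Qed.

Lemma one_minus_pow_pow (q : R) (k j : nat) : 1 - (q ^ k) ^ j = (1 - q) * qint (k * j) q.
Proof. rewrite qint_spec, pow_mult. reflexivity. Qed.

Fixpoint qoddfact (n : nat) (q : R) : R :=
  match n with
  | O => 1
  | S n' => qoddfact n' q * qint (2 * n' + 1) q
  end.

Lemma qpoch_q_q2 (n : nat) (q : R) : qpoch q (q ^ 2) n = (1 - q) ^ n * qoddfact n q.
Proof.
  induction n as [|n IHn]; [simpl; ring|].
  change (qpoch q (q ^ 2) (S n)) with (qpoch q (q ^ 2) n * (1 - (q ^ 2) ^ n * q)).
  change (qoddfact (S n) q) with (qoddfact n q * qint (2 * n + 1) q).
  rewrite IHn, <- pow_mult, <- tech_pow_Rmult.
  replace (q ^ (2 * n) * q) with (q ^ (2 * n + 1)) by (rewrite pow_add; ring).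
  rewrite <- qint_spec. ring.
Qed.

Lemma qoddfact_gt_0 (n : nat) (q : R) : 0 < q -> 0 < qoddfact n q.
Proof.
  intros q_pos. induction n as [|n IHn]; simpl; [lra|].
  apply Rmult_lt_0_compat; [assumption|].
  rewrite Nat.add_1_r. apply qint_S_gt_0. assumption.
Qed.

Lemma continuity_qoddfact (n : nat) : continuity (qoddfact n).
Proof.
  induction n as [|n IHn]; simpl qoddfact.
  - apply continuity_const. intros a b. reflexivity.
  - apply (continuity_mult (qoddfact n)); auto using continuity_qint.
Qed.

(* The pair (A_n(q), B_n(q)) of the sketch above. *)
Fixpoint alt_cofactors (m k n : nat) (q : R) : R * R :=
  match n with
  | O => (1, qint m q)
  | S n' =>
    let a := fst (alt_cofactors m k n' q) in
    let b := snd (alt_cofactors m k n' q) in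
    let a' := (1 - q ^ m) * b + q ^ m * qint (k * (2 * n' + 1)) q * a in
    (a', qint m q * a' + q ^ m * qint (k * (2 * n' + 2)) q * b)
  end.

Lemma altpoly_factor (m k n : nat) (q : R) : 0 < q -> q <> 1 -> (1 <= k)%nat ->
  altpoly (q ^ k) (2 * n) (q ^ m) = (1 - q) ^ n * fst (alt_cofactors m k n q) /\
  altpoly (q ^ k) (2 * n + 1) (q ^ m) = (1 - q) ^ (n + 1) * snd (alt_cofactors m k n q).
Proof.
  intros q_pos q_neq_1 k_pos.
  assert (p_pos : 0 < q ^ k) by (apply pow_lt; assumption).
  assert (p_neq_1 : q ^ k <> 1) by (apply pow_neq_1; assumption).
  induction n as [|n [IH_even IH_odd]].
  - unfold altpoly. simpl. rewrite !qbinomz_n_0, (qbinomz_le _ 1 1) by (assumption || lia).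
    rewrite qbinom_n_n by assumption.
    split; [ring|]. transitivity ((1 - q) * qint m q); [rewrite qint_spec|]; ring.
  - assert (even : altpoly (q ^ k) (2 * S n) (q ^ m)
                   = (1 - q) ^ S n * fst (alt_cofactors m k (S n) q)).
    { replace (2 * S n)%nat with (S (S (2 * n))) by lia.
      rewrite altpoly_rec by assumption.
      replace (S (2 * n)) with (2 * n + 1)%nat by lia.
      rewrite IH_even, IH_odd, one_minus_pow_pow, Nat.add_1_r. simpl. ring. }
    split; [exact even|].
    replace (2 * S n + 1)%nat with (S (S (2 * n + 1))) by lia.
    rewrite altpoly_rec by assumption.
    replace (S (2 * n + 1)) with (2 * S n)%nat by lia.
    rewrite even, IH_odd, one_minus_pow_pow, <- (qint_spec m q).
    replace (k * (2 * S n))%nat with (k * (2 * n + 2))%nat by lia.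
    rewrite !Nat.add_1_r. simpl. ring.
Qed.

Lemma alt_cofactors_1 (m k n : nat) :
  alt_cofactors m k n 1 = (INR k ^ n * qoddfact n 1, INR m * INR k ^ n * qoddfact (S n) 1).
Proof.
  induction n as [|n IHn].
  - simpl. rewrite qint_1. f_equal; ring.
  - simpl alt_cofactors. rewrite IHn. simpl fst; simpl snd.
    change (qoddfact (S (S n)) 1) with (qoddfact (S n) 1 * qint (2 * S n + 1) 1).
    change (qoddfact (S n) 1) with (qoddfact n 1 * qint (2 * n + 1) 1).
    rewrite !qint_1, !pow1, <- !tech_pow_Rmult.
    repeat rewrite ?plus_INR, ?mult_INR, ?S_INR, ?INR_0.
    f_equal; ring.
Qed.

Lemma continuity_alt_cofactors (m k n : nat) :
  continuity (fun q => fst (alt_cofactors m k n q)) /\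
  continuity (fun q => snd (alt_cofactors m k n q)).
Proof.
  assert (cont_pow : forall i, continuity (fun q => q ^ i))
    by (intros i; apply derivable_continuous, derivable_pow).
  induction n as [|n [cont_even cont_odd]]; simpl.
  - split; [apply continuity_const; intros a b; reflexivity|apply continuity_qint].
  - assert (cont_even' : continuity (fun q =>
      (1 - q ^ m) * snd (alt_cofactors m k n q)
      + q ^ m * qint (k * (2 * n + 1)) q * fst (alt_cofactors m k n q))).
    { apply continuity_plus; apply continuity_mult; auto.
      - apply continuity_minus; auto. apply continuity_const. intros a b. reflexivity.
      - apply continuity_mult; auto using continuity_qint. }
    split; [exact cont_even'|].
    apply continuity_plus; apply continuity_mult; auto using continuity_qint.
    apply continuity_mult; auto using continuity_qint.
Qed.

Lemma limit1_in_continuity_pt (f h : R -> R) (x r : R) :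
  0 < r -> continuity_pt h x ->
  (forall y, y <> x -> R_dist y x < r -> f y = h y) ->
  limit1_in f (fun y => y <> x) (h x) x.
Proof.
  intros r_pos h_cont f_eq eps eps_pos.
  destruct (h_cont eps eps_pos) as [alpha [alpha_pos h_close]].
  exists (Rmin alpha r). split; [apply Rmin_pos; assumption|].
  intros y [y_neq_x y_close].
  pose proof (Rmin_l alpha r). pose proof (Rmin_r alpha r).
  rewrite f_eq by (auto; simpl in y_close; lra).
  apply h_close. split; [split; [constructor|auto]|]. simpl in *. lra.
Qed.

Lemma altsum_altpoly (m k N : nat) (q : R) :
  altsum m k N q = altpoly (q ^ k) N (q ^ m).
Proof.
  unfold altsum, altpoly. apply sum_eq. intros j j_le_N.
  rewrite qbinomz_le, pow_mult by assumption. reflexivity.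
Qed.

Lemma R_dist_1_pos (q : R) : R_dist q 1 < 1 -> 0 < q.
Proof. unfold R_dist. intros H. apply Rabs_def2 in H. lra. Qed.

Lemma limit1_in_div_qoddfact (f a : R -> R) (j : nat) : continuity a ->
  (forall q, 0 < q -> q <> 1 -> f q = a q / qoddfact j q) ->
  limit1_in f (fun q => q <> 1) (a 1 / qoddfact j 1) 1.
Proof.
  intros a_cont f_eq.
  apply (limit1_in_continuity_pt f (fun q => a q / qoddfact j q) 1 1 Rlt_0_1).
  - apply continuity_pt_div; [apply a_cont|apply continuity_qoddfact|].
    apply Rgt_not_eq, qoddfact_gt_0. lra.
  - intros q q_neq_1 q_close. apply f_eq; [apply R_dist_1_pos|]; assumption.
Qed.

Theorem theorem2p2 (m k n : nat) (hk : (1 <= k)%nat) :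
  limit1_in (fun q => altsum m k (2 * n) q / qpoch q (q ^ 2) n)
            (fun q => q <> 1) (INR k ^ n) 1
  /\
  limit1_in (fun q => altsum m k (2 * n + 1) q / qpoch q (q ^ 2) (n + 1))
            (fun q => q <> 1) (INR m * INR k ^ n) 1.
Proof.
  destruct (continuity_alt_cofactors m k n) as [cont_even cont_odd].
  pose proof (alt_cofactors_1 m k n) as value_at_1.
  assert (qoddfact_1_neq_0 : forall j, qoddfact j 1 <> 0)
    by (intros j; apply Rgt_not_eq, qoddfact_gt_0; lra).
  split.
  - replace (INR k ^ n) with (fst (alt_cofactors m k n 1) / qoddfact n 1)
      by (rewrite value_at_1; cbn [fst snd]; field; auto).
    apply (limit1_in_div_qoddfact _ (fun q => fst (alt_cofactors m k n q)) n cont_even).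
    intros q q_pos q_neq_1.
    destruct (altpoly_factor m k n q q_pos q_neq_1 hk) as [even _].
    pose proof (qoddfact_gt_0 n q q_pos).
    rewrite altsum_altpoly, even, qpoch_q_q2. field.
    split; [lra|apply pow_nonzero; lra].
  - replace (INR m * INR k ^ n) with (snd (alt_cofactors m k n 1) / qoddfact (S n) 1)
      by (rewrite value_at_1; cbn [fst snd]; field; auto).
    apply (limit1_in_div_qoddfact _ (fun q => snd (alt_cofactors m k n q)) (S n) cont_odd).
    intros q q_pos q_neq_1.
    destruct (altpoly_factor m k n q q_pos q_neq_1 hk) as [_ odd].
    pose proof (qoddfact_gt_0 (S n) q q_pos).
    rewrite altsum_altpoly, odd, qpoch_q_q2, Nat.add_1_r. field.
    split; [lra|apply pow_nonzero; lra].
Qed.
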